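(* If $G$ is a connected locally Dirac graph of order $n \ge 9$, then $\operatorname{diam}(G) \le \lfloor n/3 \rfloor - 1$. Moreover, this bound is sharp: for every integer $m \ge 3$, the graph $P_m \boxtimes K_3$ is a connected locally Dirac graph of order $n=3m$ with diameter $n/3 - 1 = m-1$.
   Context: A graph $G$ is locally Dirac if for every vertex $v \in V(G)$ and every $u \in N(v)$, $\deg_{\langle N(v)\rangle}(u) \ge \deg_G(v)/2$, where $N(v)$ is the open neighbourhood of $v$ and $\langle N(v)\rangle$ the subgraph induced by it. $P_m$ is the path on $m$ vertices, $K_3$ the triangle, and $G\boxtimes H$ the strong product: vertex set $V(G)\times V(H)$, with $(u,v)\sim(x,y)$ iff ($u=x$ and $vy\in E(H)$) or ($v=y$ and $ux\in E(G)$) or ($ux\in E(G)$ and $vy\in E(H)$). *)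

From mathcomp Require Import all_boot.
Set Implicit Arguments. Unset Strict Implicit. Unset Printing Implicit Defensive.

Section Graphs.
Variable T : finType.
Variable e : rel T.

Definition simple_graph := symmetric e /\ irreflexive e.

Definition nbhd (v : T) : {set T} := [set u | e v u].

Definition deg (v : T) : nat := #|nbhd v|.

Definition deg_in_nbhd (v u : T) : nat := #|[set w in nbhd v | e u w]|.

(* locally Dirac: deg_{<N(v)>}(u) >= deg_G(v)/2, i.e. 2*deg_{<N(v)>}(u) >= deg_G(v) *)
Definition locally_dirac : Prop :=
  forall v u, u \in nbhd v -> deg v <= 2 * deg_in_nbhd v u.

Definition connected_graph : Prop := forall x y, connect e x y.

Definition walkb (x y : T) (k : nat) : bool :=
  [exists p : k.-tuple T, path e x p && (last x p == y)].

(* graph distance: least k with a walk of length k from x to y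
   (equals #|T| if no such walk exists; irrelevant for connected graphs) *)
Definition dist (x y : T) : nat := find (walkb x y) (iota 0 #|T|).

Definition diam : nat := \max_(x : T) \max_(y : T) dist x y.
End Graphs.

Definition Prel (m : nat) : rel 'I_m := fun i j => (i.+1 == j) || (j.+1 == i).

Definition K3rel : rel 'I_3 := fun a b => a != b.

Definition strong (T1 T2 : finType) (e1 : rel T1) (e2 : rel T2) : rel (T1 * T2)%type :=
  fun p q =>
    [|| (p.1 == q.1) && e2 p.2 q.2,
        (p.2 == q.2) && e1 p.1 q.1
      | e1 p.1 q.1 && e2 p.2 q.2].

From mathcomp Require Import all_boot zify.
Set Implicit Arguments. Unset Strict Implicit. Unset Printing Implicit Defensive.

(* In a locally Dirac graph the ends of an induced path u v w have two common
   neighbours with v. Measuring distances from x, a geodesic crossing three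
   consecutive spheres thus puts two more vertices in the middle sphere, so
   every sphere strictly between x and y has at least 3 vertices, and a vertex
   at distance 3 forces degree at least 5. The closed neighbourhoods of x and
   y and the spheres in between then give #|T| >= 3 (dist x y + 1).
   In P_m ⊠ K_3 the closed neighbourhoods are N_P[i] × K_3, and an edge changes
   the P_m coordinate by at most 1. *)

Section Walks.
Variables (T : finType) (e : rel T).

Lemma walkbP x y k :
  reflect (exists p : seq T, [/\ size p = k, path e x p & last x p = y])
          (walkb e x y k).
Proof.
apply: (iffP existsP) => [[p /andP[hp /eqP hl]] | [p [hs hp hl]]].
  by exists (tval p); rewrite size_tuple.
have hs' : size p == k by rewrite hs.
by exists (Tuple hs'); rewrite /= hp hl eqxx.
Qed.

Lemma walkb0 x y : walkb e x y 0 = (x == y).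
Proof.
apply/walkbP/eqP => [[p [/size0nil -> _ <-]] // | ->].
by exists [::].
Qed.

Lemma walkb_rcons x u v k : walkb e x u k -> e u v -> walkb e x v k.+1.
Proof.
move=> /walkbP [p [hs hp hl]] huv; apply/walkbP; exists (rcons p v).
by rewrite size_rcons hs rcons_path hp last_rcons hl huv.
Qed.

Lemma walkb_cons x u y k : e x u -> walkb e u y k -> walkb e x y k.+1.
Proof.
move=> hxu /walkbP [p [hs hp hl]]; apply/walkbP; exists (u :: p).
by rewrite /= hs hxu hp hl.
Qed.

Lemma walkbS x y k : walkb e x y k.+1 -> exists2 u, walkb e x u k & e u y.
Proof.
move=> /walkbP [p [hs hp hl]].
case/lastP: p hs hp hl => [//|q z].
rewrite size_rcons rcons_path last_rcons => -[hs] /andP[hq hz] <-.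
by exists (last x q) => //; apply/walkbP; exists q.
Qed.

Lemma walkb_sym : symmetric e -> forall k x y, walkb e x y k -> walkb e y x k.
Proof.
move=> esym; elim=> [|k IH] x y; first by rewrite !walkb0 eq_sym.
case/walkbS => u /IH hu huy.
by apply: walkb_cons hu; rewrite esym.
Qed.

End Walks.

Section Distance.
Variables (T : finType) (e : rel T).

Lemma walkb_dist_le x y k : walkb e x y k -> dist e x y <= k.
Proof.
move=> hw; rewrite leqNgt; apply/negP => hlt.
have hs : dist e x y <= #|T| by rewrite -(size_iota 0 #|T|) find_size.
have := before_find 0 hlt.
by rewrite nth_iota ?add0n ?hw //; apply: leq_trans hlt hs.
Qed.

Lemma dist_le_diam x y : dist e x y <= diam e.
Proof.
apply: leq_trans (leq_bigmax x); exact: (leq_bigmax (F := dist e x) y).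
Qed.

Hypothesis conn : connected_graph e.

(* A shortest path from x to y is duplicate-free, so has fewer than #|T| edges. *)
Lemma walkb_dist x y : walkb e x y (dist e x y).
Proof.
have : has (walkb e x y) (iota 0 #|T|).
  have /connectP [p hp ->] := conn x y.
  case: (shortenP hp) => p' hp' hu _.
  apply/hasP; exists (size p'); last by apply/walkbP; exists p'.
  have hc : #|x :: p'| = (size p').+1 by apply/card_uniqP.
  by rewrite mem_iota /= -hc max_card.
move=> hh; have := nth_find 0 hh.
by rewrite nth_iota //; move: hh; rewrite has_find size_iota.
Qed.

Lemma dist_eq0 x y : (dist e x y == 0) = (x == y).
Proof.
apply/idP/idP => [/eqP h | /eqP <-]; first by have := walkb_dist x y; rewrite h walkb0.
by rewrite -leqn0 walkb_dist_le // walkb0.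
Qed.

Lemma dist_xx x : dist e x x = 0.
Proof. by apply/eqP; rewrite dist_eq0. Qed.

Lemma dist_edge x u v : e u v -> dist e x v <= (dist e x u).+1.
Proof. by move=> huv; apply/walkb_dist_le/(walkb_rcons (walkb_dist x u)). Qed.

Lemma dist_predS x v k :
  dist e x v = k.+1 -> exists2 u, e u v & dist e x u = k.
Proof.
move=> h; have := walkb_dist x v; rewrite h => /walkbS [u hw huv].
exists u => //; apply/eqP; rewrite eqn_leq walkb_dist_le //=.
by rewrite -ltnS -h dist_edge.
Qed.

Lemma dist_ex x y j : j <= dist e x y -> exists z, dist e x z = j.
Proof.
have [n hn] : exists n, dist e x y = n by eexists.
rewrite hn; elim: n y hn => [|n IH] y hy hj.
  by exists y; move: hj; rewrite leqn0 hy => /eqP.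
case: (ltngtP j n.+1) hj => // [hj _| -> _]; last by exists y.
by have [u _ hu] := dist_predS hy; apply: IH hu hj.
Qed.

Hypothesis esym : symmetric e.

Lemma dist_sym x y : dist e x y = dist e y x.
Proof.
by apply/eqP; rewrite eqn_leq !walkb_dist_le // walkb_sym // walkb_dist.
Qed.

End Distance.

Section Balls.
Variables (T : finType) (e : rel T).

Definition ball x k : {set T} := [set t | dist e x t < k].
Definition sphere x k : {set T} := [set t | dist e x t == k].

Lemma card_ballS x k : #|ball x k.+1| = #|ball x k| + #|sphere x k|.
Proof.
rewrite -cardsUI.
have -> : ball x k :&: sphere x k = set0.
  by apply/setP => t; rewrite !inE; case: ltngtP.
have -> : ball x k :|: sphere x k = ball x k.+1.
  by apply/setP => t; rewrite !inE ltnS orbC -leq_eqVlt.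
by rewrite cards0 addn0.
Qed.

End Balls.

Section LocallyDirac.
Variables (T : finType) (e : rel T).
Hypotheses (esym : symmetric e) (eirr : irreflexive e) (dir : locally_dirac e).

Local Notation N := (nbhd e).

Lemma dirac_common v u : e v u -> deg e v <= 2 * #|N v :&: N u|.
Proof.
move=> hvu; have := dir (v := v) (u := u); rewrite inE => /(_ hvu).
suff -> : deg_in_nbhd e v u = #|N v :&: N u| by [].
by apply: eq_card => t; rewrite !inE.
Qed.

(* The common neighbourhoods of v with u and with w each contain at least half
   of N(v) minus the two vertices u and w, so they meet in at least 2 vertices. *)
Lemma induced_P3_common u v w :
  e u v -> e v w -> u != w -> ~~ e u w -> 2 <= #|N u :&: N v :&: N w|.
Proof.
move=> huv hvw huw nuw.
have hA := dirac_common hvw.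
have hB : deg e v <= 2 * #|N v :&: N u| by apply: dirac_common; rewrite esym.
have hsub : (N v :&: N w) :|: (N v :&: N u) \subset N v :\: [set u; w].
  apply/subsetP => t; rewrite !inE.
  have [-> | ntu] := eqVneq t u; first by rewrite eirr (esym w u) (negbTE nuw) !andbF.
  have [-> | ntw] := eqVneq t w; first by rewrite eirr (negbTE nuw) !andbF.
  by rewrite -andb_orr => /andP[].
have huwv : [set u; w] \subset N v.
  by apply/subsetP => t; rewrite !inE => /orP[] /eqP ->; rewrite ?hvw // esym.
have := subset_leq_card hsub; rewrite cardsDS // cards2 huw /=.
have -> : N u :&: N v :&: N w = (N v :&: N w) :&: (N v :&: N u).
  by apply/setP => t; rewrite !inE; case: (e u t); case: (e v t); case: (e w t).
have := subset_leq_card huwv; rewrite cards2 huw /=.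
have := cardsUI (N v :&: N w) (N v :&: N u); rewrite /deg in hA hB; lia.
Qed.

Hypothesis conn : connected_graph e.

Lemma dist_edge_r x u v : e u v -> dist e x u <= (dist e x v).+1.
Proof. by rewrite esym; apply: dist_edge. Qed.

Lemma card_sphere_ge3 x y k : k.+2 <= dist e x y -> 3 <= #|sphere e x k.+1|.
Proof.
move=> hk; have [w hw] := dist_ex conn hk.
have [v hvw hv] := dist_predS conn hw; have [u huv hu] := dist_predS conn hv.
have huw : u != w by apply/eqP => huw; move: hw; rewrite -huw hu; lia.
have nuw : ~~ e u w by apply/negP => /(dist_edge conn x); rewrite hu hw; lia.
have hS := induced_P3_common huv hvw huw nuw.
have hsub : v |: (N u :&: N v :&: N w) \subset sphere e x k.+1.
  apply/subsetP => t; rewrite !inE => /orP[/eqP -> | /andP[/andP[hut _] hwt]].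
    by rewrite hv.
  have := dist_edge conn x hut; have := dist_edge_r x hwt; rewrite hu hw; lia.
by have := subset_leq_card hsub; rewrite cardsU1 !inE eirr /= andbF; lia.
Qed.

(* v, N(u) ∩ N(v) and N(u) ∩ sphere v 2 are disjoint in N(u), so the Dirac
   condition on the edge uv makes the middle one larger than the last. *)
Lemma deg_ge5_of_sphere2 u v : e u v -> 3 <= #|N u :&: sphere e v 2| -> 5 <= deg e v.
Proof.
move=> huv; set P := N u :&: N v; set Q := N u :&: sphere e v 2 => hQ.
have hP : deg e u <= 2 * #|P| by apply: dirac_common.
have hPQ : P :&: Q = set0.
  apply/setP => t; rewrite !inE; apply/negP => /andP[/andP[_ hvt] /andP[_ /eqP ht]].
  by have := dist_edge conn v hvt; rewrite (dist_xx conn) ht.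
have hPQsub : P :|: Q \subset N u :\ v.
  by apply/subsetP => t; rewrite !inE => /orP[] /andP[-> h]; rewrite andbT;
    apply: contraTneq h => ->; rewrite ?eirr ?(dist_xx conn).
have := subset_leq_card hPQsub; have := cardsUI P Q; rewrite hPQ cards0.
have := cardsD1 v (N u); rewrite inE huv /deg in hP *.
have hPv : u |: P \subset N v.
  by apply/subsetP => t; rewrite !inE => /orP[/eqP -> | /andP[_ ->]]; rewrite // esym.
have := subset_leq_card hPv; rewrite cardsU1 !inE eirr /=; lia.
Qed.

(* Along a geodesic v u w z, the common neighbours of u, w, z, together with w,
   are neighbours of u at distance 2 from v. *)
Lemma deg_ge5 v y : 3 <= dist e v y -> 5 <= deg e v.
Proof.
move=> h3; have [z hz] := dist_ex conn h3.
have [w hwz hw] := dist_predS conn hz; have [u huw hu] := dist_predS conn hw.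
have [v' hvu /eqP] := dist_predS conn hu; rewrite dist_eq0 // => /eqP hv'.
subst v'; apply: (@deg_ge5_of_sphere2 u); first by rewrite esym.
have huz : u != z by apply/eqP => huz; move: hz; rewrite -huz hu.
have nuz : ~~ e u z by apply/negP => /(dist_edge conn v); rewrite hu hz.
have hS := induced_P3_common huw hwz huz nuz.
have hsub : w |: (N u :&: N w :&: N z) \subset N u :&: sphere e v 2.
  apply/subsetP => t; rewrite !inE => /orP[/eqP -> | /andP[/andP[hut _] hzt]].
    by rewrite huw hw.
  rewrite hut /=; have := dist_edge conn v hut; have := dist_edge_r v hzt.
  by rewrite hu hz; lia.
by have := subset_leq_card hsub; rewrite cardsU1 !inE eirr /= andbF; lia.
Qed.

Lemma card_ball_ge x y j : 2 <= j -> j < dist e x y -> 3 * j <= #|ball e x j|.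
Proof.
elim: j => [|j IH] // hj hjD.
case: (leqP j 1) => hj1.
  have -> : j.+1 = 2 by lia.
  have hx : x |: N x \subset ball e x 2.
    apply/subsetP => t; rewrite !inE => /orP[/eqP -> | hxt].
      by rewrite (dist_xx conn).
    by have := dist_edge conn x hxt; rewrite (dist_xx conn).
  have := subset_leq_card hx; rewrite cardsU1 inE eirr.
  by have := @deg_ge5 x y (ltac:(lia)); rewrite /deg; lia.
have := IH hj1 (ltnW hjD); rewrite card_ballS.
case: j {IH hj} hj1 hjD => [//|k] _ hkD.
by have := @card_sphere_ge3 x y k (ltnW hkD); lia.
Qed.

Lemma dist_le_card x y : 9 <= #|T| -> dist e x y <= #|T| %/ 3 - 1.
Proof.
move=> hn; set D := dist e x y.
case: (leqP D 2) => hD; first lia.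
have hball := @card_ball_ge x y D.-1 (ltac:(lia)) (ltac:(lia)).
have hy : 5 <= deg e y by apply: (@deg_ge5 y x); rewrite (dist_sym conn esym).
have hdisj : ball e x D.-1 :&: (y |: N y) = set0.
  apply/setP => t; rewrite !inE; apply/negP => /andP[hxt /orP[/eqP ht | hyt]].
    by move: hxt; rewrite ht; lia.
  by have := dist_edge_r x hyt; lia.
have := cardsUI (ball e x D.-1) (y |: N y); rewrite hdisj cards0 cardsU1 inE eirr.
by have := max_card (ball e x D.-1 :|: (y |: N y)); rewrite /deg in hy; lia.
Qed.

Lemma diam_le_card : 9 <= #|T| -> diam e <= #|T| %/ 3 - 1.
Proof.
move=> hn; apply/bigmax_leqP => x _; apply/bigmax_leqP => y _.
exact: dist_le_card.
Qed.

End LocallyDirac.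

Section StrongK3.
Variables (T1 : finType) (e1 : rel T1).
Hypotheses (e1sym : symmetric e1) (e1irr : irreflexive e1).

Local Notation E := (strong e1 K3rel).

Definition cnbhd (i : T1) : {set T1} := [set j | (i == j) || e1 i j].

Lemma strongK3E p q : E p q = (p != q) && (q.1 \in cnbhd p.1).
Proof.
case: p q => [i a] [j b]; rewrite /strong /K3rel inE xpair_eqE /=.
have [<- | nij] := eqVneq i j; first by rewrite e1irr /= andbF orbF.
by case: (e1 i j); case: (a == b).
Qed.

Lemma strongK3_simple : simple_graph E.
Proof.
split=> [p q | p]; rewrite !strongK3E ?eqxx // eq_sym !inE.
by rewrite [q.1 == _]eq_sym e1sym.
Qed.

Lemma strongK3_connected : connected_graph e1 -> connected_graph E.
Proof.
move=> conn1 [i a] [j b]; apply: (@connect_trans _ _ (j, a)).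
  have row_edge : {homo (fun k => (k, a)) : k l / e1 k l >-> E k l}.
    move=> k l hkl; rewrite strongK3E inE hkl orbT andbT xpair_eqE.
    by apply: contraTN hkl => /andP[/eqP -> _]; rewrite e1irr.
  have /connectP [p hp ->] := conn1 i j.
  apply/connectP; exists [seq (k, a) | k <- p].
    exact: homo_path row_edge hp.
  by rewrite last_map.
have [-> | nab] := eqVneq a b; first exact: connect0.
by apply: connect1; rewrite strongK3E inE eqxx xpair_eqE eqxx nab.
Qed.

Lemma cnbhd_refl i : i \in cnbhd i.
Proof. by rewrite inE eqxx. Qed.

Local Notation C v := (setX (cnbhd v.1) [set: 'I_3]).

Lemma card_cnbhdX (A : {set T1}) : #|setX A [set: 'I_3]| = 3 * #|A|.
Proof. by rewrite cardsX cardsT card_ord mulnC. Qed.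

(* G ⊠ K3 has closed neighbourhoods N_G[i] × K3, so a common neighbourhood in
   G ⊠ K3 has 3 |N_G[i] ∩ N_G[j]| - 2 vertices. *)
Lemma strongK3_locally_dirac :
  (forall i j, e1 i j -> #|cnbhd i| < 2 * #|cnbhd i :&: cnbhd j|) ->
  locally_dirac E.
Proof.
move=> hoverlap v u; rewrite inE strongK3E inE => /andP[nvu hu1].
have hCv : v \in C v by rewrite !inE eqxx.
have hdeg : deg E v = #|C v| - 1.
  rewrite (cardsD1 v) hCv add1n subSS subn0 /deg; apply: eq_card => w.
  by rewrite [w \in nbhd _ _]inE strongK3E !inE eq_sym andbT.
have hcommon : deg_in_nbhd E v u = #|C v :&: C u| - 2.
  have huv : [set u; v] \subset C v :&: C u.
    apply/subsetP => w; rewrite !inE => /orP[] /eqP ->; rewrite !eqxx /= ?andbT //.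
    by rewrite (eq_sym u.1) (e1sym u.1).
  have := cardsDS huv; rewrite cards2 eq_sym nvu => /= <-.
  apply: eq_card => w.
  rewrite !inE !strongK3E !inE [w == u]eq_sym [w == v]eq_sym.
  by case: (u == w); case: (v == w); rewrite /= ?andbT ?andbF.
have hCI : C v :&: C u = setX (cnbhd v.1 :&: cnbhd u.1) [set: 'I_3].
  by apply/setP => w; rewrite !inE !andbT.
have hrow : #|cnbhd v.1| < 2 * #|cnbhd v.1 :&: cnbhd u.1|.
  have [e12 | n12] := eqVneq v.1 u.1.
    have : 0 < #|cnbhd v.1| by apply/card_gt0P; exists v.1; apply: cnbhd_refl.
    by rewrite -e12 setIid; lia.
  by apply: hoverlap; move: hu1; rewrite (negbTE n12).
rewrite hdeg hcommon hCI !card_cnbhdX; lia.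
Qed.

End StrongK3.

Section PathStrongK3.
Variable m : nat.

Local Notation E := (strong (@Prel m) K3rel).

Lemma Prel_sym : symmetric (@Prel m).
Proof. by move=> i j; rewrite /Prel orbC. Qed.

Lemma Prel_irr : irreflexive (@Prel m).
Proof. by move=> i; rewrite /Prel orbb; lia. Qed.

Lemma card_cnbhd_Prel (i : 'I_m) : #|cnbhd (@Prel m) i| <= 3.
Proof.
rewrite cardE -(size_map (@nat_of_ord m)).
apply: (@uniq_leq_size _ _ [:: i.-1; i : nat; i.+1]).
  by rewrite map_inj_uniq ?enum_uniq //; apply: val_inj.
move=> k /mapP [j]; rewrite mem_enum !inE /Prel => /or3P[] /eqP hij ->;
  rewrite ?hij ?inE; lia.
Qed.

Lemma Prel_cnbhd_overlap (i j : 'I_m) :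
  Prel i j -> #|cnbhd (@Prel m) i| < 2 * #|cnbhd (@Prel m) i :&: cnbhd (@Prel m) j|.
Proof.
move=> hij; have nij : i != j by apply: contraTneq hij => ->; rewrite Prel_irr.
have hsub : [set i; j] \subset cnbhd (@Prel m) i :&: cnbhd (@Prel m) j.
  apply/subsetP => k; rewrite !inE => /orP[] /eqP ->;
    by rewrite ?eqxx ?(Prel_sym j) hij !orbT.
have := subset_leq_card hsub; rewrite cards2 nij.
by have := card_cnbhd_Prel i; lia.
Qed.

Lemma Prel_connected : connected_graph (@Prel m).
Proof.
have up (i : 'I_m) n (hn : i + n < m) : connect (@Prel m) i (Ordinal hn).
  elim: n hn => [|n IH] hn.
    by rewrite (_ : Ordinal hn = i) //; apply: val_inj; rewrite /= addn0.
  have hn' : i + n < m by lia.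
  apply: connect_trans (IH hn') (connect1 _).
  by rewrite /Prel /= addnS eqxx.
move=> i j; wlog hij : i j / i <= j => [hwlog | ].
  have [/hwlog // | /ltnW /hwlog] := leqP i j.
  by rewrite (sym_connect_sym Prel_sym).
have hn : i + (j - i) < m by rewrite subnKC.
by rewrite (_ : j = Ordinal hn) //; apply: val_inj; rewrite /= subnKC.
Qed.

Lemma strong_Prel_simple : simple_graph E.
Proof. exact: strongK3_simple Prel_sym Prel_irr. Qed.

Lemma strong_Prel_connected : connected_graph E.
Proof. exact: strongK3_connected Prel_irr Prel_connected. Qed.

Lemma strong_Prel_locally_dirac : locally_dirac E.
Proof. exact: strongK3_locally_dirac Prel_sym Prel_irr Prel_cnbhd_overlap. Qed.

Lemma strong_Prel_walk_row k x y : walkb E x y k -> y.1 <= x.1 + k.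
Proof.
elim: k y => [|k IH] y; first by rewrite walkb0 => /eqP ->; rewrite addn0.
case/walkbS => u /IH hu; rewrite strongK3E ?inE /Prel; last exact: Prel_irr.
by case/andP=> _ /or3P[/eqP <- | /eqP | /eqP]; lia.
Qed.

Lemma diam_strong_Prel : 3 <= m -> diam E = m - 1.
Proof.
move=> hm; have [hsym hirr] := strong_Prel_simple.
have hconn := strong_Prel_connected.
have hcard : #|{: 'I_m * 'I_3}| = 3 * m by rewrite card_prod !card_ord mulnC.
apply/eqP; rewrite eqn_leq; apply/andP; split.
  have := diam_le_card hsym hirr strong_Prel_locally_dirac hconn.
  by rewrite hcard mulKn //; apply; lia.
have h0 : 0 < m by lia.
have hm1 : m.-1 < m by lia.
set x : 'I_m * 'I_3 := (Ordinal h0, ord0); set y : 'I_m * 'I_3 := (Ordinal hm1, ord0).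
have /= := strong_Prel_walk_row (walkb_dist hconn x y).
by have := dist_le_diam E x y; lia.
Qed.

End PathStrongK3.

Theorem mainTheorem9 :
  (forall (T : finType) (e : rel T),
      simple_graph e -> connected_graph e -> locally_dirac e -> 9 <= #|T| ->
      diam e <= #|T| %/ 3 - 1)
  /\
  (forall m : nat, 3 <= m ->
      simple_graph (strong (@Prel m) K3rel) /\
      connected_graph (strong (@Prel m) K3rel) /\
      locally_dirac (strong (@Prel m) K3rel) /\
      #|{: 'I_m * 'I_3}| = 3 * m /\
      diam (strong (@Prel m) K3rel) = #|{: 'I_m * 'I_3}| %/ 3 - 1 /\
      diam (strong (@Prel m) K3rel) = m - 1).
Proof.
split=> [T e [esym eirr] conn dir | m hm].
  exact: diam_le_card.
have hcard : #|{: 'I_m * 'I_3}| = 3 * m by rewrite card_prod !card_ord mulnC.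
rewrite hcard mulKn // diam_strong_Prel //.
split; first exact: strong_Prel_simple.
split; first exact: strong_Prel_connected.
by split; first exact: strong_Prel_locally_dirac.
Qed.
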